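(* Let $q\in X^*\setminus\{e\}$, let $q_0$ be the shortest word in $P_q$, and write $q=q_0^k\cdot\bar q$ with $\bar q\sqsubset q_0$ (so $k=\lfloor|q|/|q_0|\rfloor$). Then $\sqrt[*]{P_q}$ is a code having a delay of decipherability of at most $k+1$; that is, for all $w,w',v_1,\dots,v_{k+1}\in\sqrt[*]{P_q}$ and $u\in(\sqrt[*]{P_q})^*$, the relation $w\cdot v_1\cdots v_{k+1}\sqsubseteq w'\cdot u$ implies $w=w'$.
   Context: $X$ is a finite alphabet; $X^*$ the finite words (empty word $e$); $|w|$ is length; $w\sqsubseteq\eta$ means $w$ is a prefix of $\eta$, $w\sqsubset\eta$ a proper prefix. $P_q:=\{v: e\sqsubset v\sqsubseteq q\sqsubset v\cdot q\}$; $q_0$ is its shortest element. The star root is $\sqrt[*]{P_q}:=P_q\setminus(P_q^2\cdot P_q^* )$. A language $C$ is a code if $w_1\cdots w_l=v_1\cdots v_k$ with all $w_i,v_j\in C$ implies $l=k$ and $w_i=v_i$ for all $i$; it has delay of decipherability $m$ if for all $w,w',v_1,\dots,v_m\in C$ and $u\in C^*$, $w\cdot v_1\cdots v_m\sqsubseteq w'\cdot u$ implies $w=w'$. *)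

From mathcomp Require Import all_boot.
Set Implicit Arguments. Unset Strict Implicit. Unset Printing Implicit Defensive.

Section Words.
Variable T : finType.
Notation word := (seq T).

(* w ⊑ v : w is a prefix of v (mathcomp's [prefix]); w ⊏ v : proper prefix *)
Definition pprefix (w v : word) : bool := prefix w v && (size w < size v).

Definition Pq (q : word) (v : word) : Prop :=
  pprefix [::] v /\ prefix v q /\ pprefix q (v ++ q).

(* star root of a language L : L \ (L^2 · L^* ) *)
Definition star_root (L : word -> Prop) (v : word) : Prop :=
  L v /\ ~ (exists s : seq word, 2 <= size s /\ (forall x, x \in s -> L x) /\ flatten s = v).

Definition is_code (C : word -> Prop) : Prop :=
  forall ws vs : seq word, (forall x, x \in ws -> C x) -> (forall x, x \in vs -> C x) ->
    flatten ws = flatten vs -> ws = vs.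

Definition has_delay (m : nat) (C : word -> Prop) : Prop :=
  forall (w w' : word) (vs us : seq word),
    C w -> C w' -> size vs = m -> (forall x, x \in vs -> C x) ->
    (forall x, x \in us -> C x) ->
    prefix (w ++ flatten vs) (w' ++ flatten us) -> w = w'.
End Words.

(* A word v lies in P_q exactly when v is the prefix of q of length |v| and |v| is a period
   of q.  If two elements w, w' of the star root, |w| < |w'|, are both followed by an
   occurrence of q inside one word Y, the shift d = |w'| - |w| between the two occurrences
   is again a period of q, and then w' = w . q[0..d) lies in P_q^2, which is impossible.
   Since q is a prefix of v . q for every v in P_q, a product v_1 ... v_m starts with q as
   soon as it is at least |q| long, which for m = k + 1 follows from |q| < (k + 1) |q_0|;
   for the code property the occurrence of q is obtained by appending q to both sides. *)
From mathcomp Require Import all_boot.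
Set Implicit Arguments. Unset Strict Implicit. Unset Printing Implicit Defensive.

Section Prefixes.
Variable T : eqType.
Implicit Types s t u : seq T.

Lemma prefix_take_eq s t d : prefix s t -> d <= size s -> take d s = take d t.
Proof. by move=> /prefixP[r ->] le_ds; rewrite takel_cat. Qed.

Lemma prefix_of_prefixes s t u :
  prefix s u -> prefix t u -> size s <= size t -> prefix s t.
Proof.
by move=> s_u t_u le_st; rewrite prefixE (prefix_take_eq t_u le_st) -prefixE.
Qed.

Lemma prefix_drop d s t : prefix s t -> prefix (drop d s) (drop d t).
Proof.
move=> /prefixP[r ->]; rewrite drop_cat.
case: ltnP => [_ | le_sd]; first exact: prefix_prefix.
by rewrite drop_oversize ?prefix0s.
Qed.

Lemma prefix_cat_drop s t u : prefix (s ++ t) u -> prefix t (drop (size s) u).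
Proof. by move=> /prefixP[r ->]; rewrite -catA drop_size_cat ?prefix_prefix. Qed.

End Prefixes.

Lemma star_root_cat (T : finType) (L : seq T -> Prop) u z :
  L u -> L z -> ~ star_root L (u ++ z).
Proof.
move=> Lu Lz [_]; apply; exists [:: u; z]; split => //; split; last by rewrite /= cats0.
by move=> x; rewrite !inE => /orP[] /eqP ->.
Qed.

Lemma size_flatten_ge (T : eqType) (p : nat) (vs : seq (seq T)) :
  (forall v, v \in vs -> p <= size v) -> size vs * p <= size (flatten vs).
Proof.
elim: vs => [|v vs IHvs] //= le_p.
rewrite mulSn size_cat leq_add ?le_p ?mem_head // IHvs // => x vs_x.
by rewrite le_p // inE vs_x orbT.
Qed.

Section StarRootPq.
Variables (T : finType) (q : seq T).
Implicit Types (v w : seq T) (vs : seq (seq T)).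

Lemma PqE v :
  Pq q v <-> [/\ 0 < size v <= size q, v = take (size v) q & prefix (drop (size v) q) q].
Proof.
rewrite /Pq /pprefix prefix0s /= size_cat -{1}[size q]add0n ltn_add2r.
split=> [[v_gt0 [v_q /andP[q_vq _]]] | [/andP[v_gt0 _] def_v period_v]].
  have def_v : v = take (size v) q by apply/esym/eqP; rewrite -prefixE.
  split=> //; first by rewrite v_gt0 size_prefix.
  by move: q_vq; rewrite -{1}(cat_take_drop (size v) q) -def_v prefix_catr ?eqxx.
split=> //; split; first by rewrite def_v prefix_take.
by rewrite -{1}(cat_take_drop (size v) q) -def_v prefix_catr ?eqxx ?period_v.
Qed.

Lemma Pq_take d : 0 < d <= size q -> prefix (drop d q) q -> Pq q (take d q).
Proof.
move=> /andP[d_gt0 le_dq] period_d; apply/PqE.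
by rewrite size_takel // d_gt0 le_dq.
Qed.

Lemma prefix_flatten_Pq vs : (forall v, v \in vs -> Pq q v) -> prefix q (flatten vs ++ q).
Proof.
elim: vs => [|v vs IHvs] Pq_vs /=; first exact: prefix_refl.
rewrite -catA.
have [_ [_ /andP[q_vq _]]] := Pq_vs v (mem_head _ _).
have /prefixP[r ->] : prefix q (flatten vs ++ q).
  by apply: IHvs => x vs_x; apply: Pq_vs; rewrite inE vs_x orbT.
by rewrite catA; apply: prefix_catl.
Qed.

Lemma star_root_Pq_occurrences w w' Y :
  star_root (Pq q) w -> star_root (Pq q) w' ->
  prefix q (drop (size w) Y) -> prefix q (drop (size w') Y) -> w = w'.
Proof.
wlog le_ww' : w w' / size w <= size w'.
  move=> sym Rw Rw' qw qw'; case: (leqP (size w) (size w')) => [|/ltnW] le.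
    exact: sym.
  by apply/esym/sym.
move=> [Pw _] Rw' qw qw'; have [Pw' _] := Rw'.
have [/andP[_ le_w'q] def_w' _] := (PqE w').1 Pw'.
have [_ def_w period_w] := (PqE w).1 Pw.
case: ltngtP le_ww' => // [lt_ww' _ | eq_ww' _]; last by rewrite def_w def_w' eq_ww'.
set d := size w' - size w.
have period_d : prefix (drop d q) q.
  have := prefix_drop d qw; rewrite drop_drop subnK ?(ltnW lt_ww') // => qd_w'.
  by apply: prefix_of_prefixes qd_w' qw' _; rewrite size_drop leq_subr.
have def_w'_cat : w' = w ++ take d q.
  rewrite def_w' -(subnKC (ltnW lt_ww')) takeD -def_w.
  by rewrite (prefix_take_eq period_w) // size_drop leq_sub2r.
have d_range : 0 < d <= size q by rewrite subn_gt0 lt_ww' (leq_trans (leq_subr _ _) le_w'q).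
case: (star_root_cat Pw (Pq_take d_range period_d)).
by rewrite -def_w'_cat.
Qed.

Lemma is_code_star_root_Pq : is_code (star_root (Pq q)).
Proof.
elim=> [|w ws IHws] [|v vs] //= R_ws R_vs def_ws.
- have [/PqE[/andP[v_gt0 _] _ _] _] := R_vs v (mem_head _ _).
  by move: def_ws; case: (v) v_gt0.
- have [/PqE[/andP[w_gt0 _] _ _] _] := R_ws w (mem_head _ _).
  by move: def_ws; case: (w) w_gt0.
have Pq_ws x : x \in ws -> Pq q x by move=> ws_x; apply: (R_ws x _).1; rewrite inE ws_x orbT.
have Pq_vs x : x \in vs -> Pq q x by move=> vs_x; apply: (R_vs x _).1; rewrite inE vs_x orbT.
have eq_wv : w = v.
  apply: (@star_root_Pq_occurrences _ _ (w ++ flatten ws ++ q)).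
  - exact: R_ws (mem_head _ _).
  - exact: R_vs (mem_head _ _).
  - by rewrite drop_size_cat // (prefix_flatten_Pq Pq_ws).
  - by rewrite catA def_ws -catA drop_size_cat // (prefix_flatten_Pq Pq_vs).
move: def_ws; rewrite -eq_wv => /(congr1 (drop (size w))); rewrite !drop_size_cat // => eq_ws.
congr (_ :: _); apply: IHws eq_ws => x x_in; [apply: R_ws | apply: R_vs];
  by rewrite inE x_in orbT.
Qed.

Lemma has_delay_star_root_Pq m p :
  (forall v, Pq q v -> p <= size v) -> size q <= m * p -> has_delay m (star_root (Pq q)).
Proof.
move=> le_pPq le_q_mp w w' vs us Rw Rw' size_vs R_vs R_us pre.
have Pq_vs x : x \in vs -> Pq q x by move=> /R_vs[].
have Pq_us x : x \in us -> Pq q x by move=> /R_us[].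
have le_q_vs : size q <= size (flatten vs).
  apply: leq_trans le_q_mp _; rewrite -size_vs.
  by apply: size_flatten_ge => x /Pq_vs /le_pPq.
have q_vs : prefix q (flatten vs).
  exact: prefix_of_prefixes (prefix_flatten_Pq Pq_vs) (prefix_prefix _ _) le_q_vs.
apply: (@star_root_Pq_occurrences _ _ (w' ++ flatten us ++ q)) => //.
  apply: prefix_trans q_vs (prefix_cat_drop _); rewrite catA.
  exact: prefix_catl pre.
by rewrite drop_size_cat // (prefix_flatten_Pq Pq_us).
Qed.

End StarRootPq.

Theorem theorem2 (T : finType) (q q0 qbar : seq T) (k : nat) :
  q != [::] ->
  Pq q q0 -> (forall v, Pq q v -> size q0 <= size v) ->
  q = flatten (nseq k q0) ++ qbar -> pprefix qbar q0 ->
  is_code (star_root (Pq q)) /\ has_delay k.+1 (star_root (Pq q)).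
Proof.
move=> _ _ min_q0 def_q /andP[_ lt_qbar_q0].
split; first exact: is_code_star_root_Pq.
apply: has_delay_star_root_Pq min_q0 _.
rewrite def_q size_cat size_flatten /shape map_nseq sumn_nseq mulnC mulSnr leq_add2l.
exact: ltnW.
Qed.
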